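(* Let $(X,+,d)$ be an Abelian metric group with translation-invariant metric $d$ such that every non-empty open ball in $X$ contains infinitely many elements. Let $A\in K(X)$. If the spectre operator $S:K(X)\to K(X)$ is continuous at $A$ (with respect to the Pompeiu–Hausdorff metric), then $S(A)=\{0\}$.
   Context: $d$ satisfies $d(x,y)=d(x+z,y+z)$ for all $x,y,z\in X$; $0$ is the neutral element. $K(X)$ is the family of non-empty compact subsets of $X$ with the Pompeiu–Hausdorff metric $d_H(A,B)=\max\{\sup_{a\in A}d(a,B),\sup_{b\in B}d(A,b)\}$. The spectre of $A\subset X$ is $S(A):=\{z\in X:\ \forall_{a\in A}\ (a+z\in A \text{ or } a-z\in A)\}$; it is compact for compact non-empty $A$. *)

From HB Require Import structures.
From mathcomp Require Import all_boot all_order all_algebra.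
From mathcomp Require Import boolp classical_sets cardinality reals.
Set Implicit Arguments. Unset Strict Implicit. Unset Printing Implicit Defensive.
Import Order.TTheory GRing.Theory Num.Theory.
Local Open Scope classical_set_scope.
Local Open Scope ring_scope.

Section Defs.
Variables (X : zmodType) (R : realType) (d : X -> X -> R).

Definition is_metric : Prop :=
  (forall x y, 0 <= d x y) /\ (forall x y, d x y = 0 <-> x = y) /\
  (forall x y, d x y = d y x) /\ (forall x y z, d x z <= d x y + d y z).

Definition translation_invariant : Prop :=
  forall x y z, d x y = d (x + z) (y + z).

Definition oball (x : X) (r : R) : set X := [set y | d x y < r].

Definition metric_open (U : set X) : Prop :=
  forall x, U x -> exists2 r : R, 0 < r & oball x r `<=` U.

Definition metric_compact (A : set X) : Prop :=
  forall (I : Type) (U : I -> set X),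
    (forall i, metric_open (U i)) -> A `<=` \bigcup_i U i ->
    exists2 F : set I, finite_set F & A `<=` \bigcup_(i in F) U i.

Definition inK (A : set X) : Prop := A !=set0 /\ metric_compact A.

Definition dist_pt_set (a : X) (B : set X) : R := inf [set d a b | b in B].

Definition dH (A B : set X) : R :=
  Num.max (sup [set dist_pt_set a B | a in A])
          (sup [set dist_pt_set b A | b in B]).

Definition spectre (A : set X) : set X :=
  [set z | forall a, A a -> A (a + z) \/ A (a - z)].

Definition spectre_continuous_at (A : set X) : Prop :=
  forall eps : R, 0 < eps -> exists2 delta : R, 0 < delta &
    forall B, inK B -> dH B A < delta -> dH (spectre B) (spectre A) < eps.

End Defs.

From mathcomp Require Import all_boot all_order all_algebra.
From mathcomp Require Import boolp classical_sets cardinality reals lra.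
Set Implicit Arguments. Unset Strict Implicit. Unset Printing Implicit Defensive.
Import Order.TTheory GRing.Theory Num.Theory.
Local Open Scope classical_set_scope.
Local Open Scope ring_scope.

(* If z <> 0 lies in S(A), approximate A in the Pompeiu-Hausdorff metric by
   finite sets B with at least five points and no nontrivial coincidence of
   differences; they are built greedily, which is possible because balls are
   infinite.  Such a B has S(B) = {0}: a nonzero z in S(B) would confine B to
   {x - z, x, x + z, x + 2z}.  Hence d_H(S(B), S(A)) = d_H({0}, S(A)) >= d(z, 0)
   for B arbitrarily close to A, contradicting continuity at A. *)

Section QuasiSidon.
Variable X : zmodType.

Lemma spectre0 (A : set X) : spectre A 0.
Proof. by move=> a Aa; left; rewrite addr0. Qed.

(* Unlike a Sidon set, three-term progressions y - x = x - u are allowed: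
   excluding them would mean avoiding the solutions of 2b = c, of which there
   may be infinitely many when X has 2-torsion. *)
Definition quasi_sidon (t : seq X) : Prop :=
  forall x y u v, x \in t -> y \in t -> u \in t -> v \in t ->
    y - x = v - u -> x = y \/ x = u \/ x = v \/ y = u \/ y = v.

Definition sidon_obstruction (t : seq X) : seq X :=
  [seq s - r | s <- [seq p + q | p <- t, q <- t], r <- t].

Lemma mem_sidon_obstruction (t : seq X) : {subset t <= sidon_obstruction t}.
Proof.
by move=> b bt; rewrite -(addrK b b); apply: allpairs_f (allpairs_f _ bt bt) bt.
Qed.

Lemma quasi_sidon_nil : quasi_sidon [::].
Proof. by []. Qed.

Lemma quasi_sidon_cons (t : seq X) (b : X) :
  quasi_sidon t -> b \notin sidon_obstruction t -> quasi_sidon (b :: t).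
Proof.
move=> sidon_t b_free.
have bP p q r : p \in t -> q \in t -> r \in t -> b - p <> q - r.
  move=> pt qt rt E; move/negP: b_free; apply.
  have -> : b = p + q - r by rewrite -addrA -E addrC subrK.
  by apply: allpairs_f rt; apply: allpairs_f.
move=> x y u v; rewrite !inE.
move=> /predU1P[->|xt] /predU1P[->|yt] /predU1P[->|ut] /predU1P[->|vt] E;
  try by [left | right; left | do 2 right; left | do 3 right; left | do 4 right].
- by case: (bP _ _ _ yt ut vt); rewrite -opprB E opprB.
- by case: (bP _ _ _ xt vt ut).
- by left; apply/eqP; rewrite eq_sym -subr_eq0 E subrr.
- by case: (bP _ _ _ vt xt yt); rewrite -opprB -E opprB.
- by case: (bP _ _ _ ut yt xt).
- exact: sidon_t.
Qed.

Lemma quasi_sidon_translate (t : seq X) (z x w : X) :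
  quasi_sidon t -> z != 0 -> x \in t -> x + z \in t -> w \in t -> w + z \in t ->
  w \in [:: x - z; x; x + z].
Proof.
move=> sidon_t nz xt xzt wt wzt.
have E : (w + z) - w = (x + z) - x by rewrite !(addrC _ z) !addrK.
have [wwz|[->|[->|[wzx|/addIr->]]]] := sidon_t _ _ _ _ wt wzt xt xzt E;
  rewrite !inE ?eqxx ?orbT //.
- by move/eqP: wwz; rewrite -{1}[w]addr0 (inj_eq (addrI w)) eq_sym (negPf nz).
- by rewrite -wzx addrK eqxx.
Qed.

Lemma quasi_sidon_spectre_sub (t : seq X) (z x : X) :
  quasi_sidon t -> z != 0 -> spectre [set` t] z -> x \in t -> x + z \in t ->
  {subset t <= [:: x - z; x; x + z; x + z + z]}.
Proof.
move=> sidon_t nz Sz xt xzt w wt.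
have [wzt|wzt] := Sz w wt.
  move: (quasi_sidon_translate sidon_t nz xt xzt wt wzt).
  by rewrite !inE => /or3P[]->; rewrite ?orbT.
move: (quasi_sidon_translate sidon_t nz xt xzt wzt); rewrite subrK => /(_ wt).
by rewrite !inE !subr_eq subrK => /or3P[]->; rewrite ?orbT.
Qed.

Lemma spectre_quasi_sidon (t : seq X) :
  quasi_sidon t -> uniq t -> (4 < size t)%N -> spectre [set` t] = [set 0].
Proof.
move=> sidon_t t_uniq size_t; apply/seteqP; split=> [z Sz|_ ->]; last exact: spectre0.
have ta : nth 0 t 0 \in t by apply: mem_nth; exact: leq_ltn_trans (leq0n 4) size_t.
apply/eqP; apply: contraTT size_t => nz; rewrite -leqNgt.
have [x xt xzt] : exists2 x, x \in t & x + z \in t.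
  have [|] := Sz _ ta; first by exists (nth 0 t 0).
  by exists (nth 0 t 0 - z); rewrite ?subrK.
exact: uniq_leq_size t_uniq (quasi_sidon_spectre_sub sidon_t nz Sz xt xzt).
Qed.

End QuasiSidon.

Section MetricGroup.
Variables (X : zmodType) (R : realType) (d : X -> X -> R).
Hypothesis d_metric : is_metric d.

Let d_ge0 x y : 0 <= d x y := d_metric.1 x y.
Let d_xx x : d x x = 0 := proj2 (d_metric.2.1 x x) erefl.
Let d_sym x y : d x y = d y x := d_metric.2.2.1 x y.
Let d_tri x y z : d x z <= d x y + d y z := d_metric.2.2.2 x y z.

Lemma metric_compact_seq (t : seq X) : metric_compact d [set` t].
Proof.
move=> I U _; elim: t => [|a t IH] cover.
  by exists set0; [exact: finite_set0 | move=> x /=; rewrite in_nil].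
have [i _ Uia] := cover a (mem_head a t).
have [|F fin_F cover_F] := IH.
  by move=> x /= xt; apply: cover; rewrite /= inE xt orbT.
exists (i |` F); first by rewrite finite_setU; split=> //; exact: finite_set1.
move=> x /=; rewrite inE => /predU1P[->|xt]; first by exists i => //; left.
by have [j Fj Ujx] := cover_F x xt; exists j => //; right.
Qed.

Lemma metric_open_oball (x : X) (r : R) : metric_open d (oball d x r).
Proof.
move=> y xy; exists (r - d x y); first by rewrite subr_gt0.
by move=> w yw; rewrite /oball /= in xy yw *; have := d_tri x y w; lra.
Qed.

Lemma compact_finite_net (A : set X) (eps : R) : metric_compact d A -> 0 < eps ->
  exists2 s : seq X, (forall c, c \in s -> A c) &
    forall y, A y -> exists2 c, c \in s & d c y < eps.
Proof.
move=> A_compact eps_gt0.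
pose U a := [set y | A a /\ oball d a eps y].
have U_open a : metric_open d (U a).
  move=> y [Aa ay]; have [r r_gt0 sub_r] := metric_open_oball ay.
  by exists r => // w /sub_r.
have [|F F_fin cover_F] := A_compact X U U_open.
  by move=> y Ay; exists y => //; split; rewrite // /oball /= d_xx.
have [s0 F_s0] := proj1 (finite_seqP F) F_fin.
exists [seq c <- s0 | `[< A c >]] => [c|y Ay].
  by rewrite mem_filter => /andP[/asboolP].
have [c Fc [Ac cy]] := cover_F y Ay.
exists c => //; rewrite mem_filter; apply/andP; split; first exact/asboolP.
by move: Fc; rewrite F_s0.
Qed.

Lemma compact_bounded (A : set X) (a0 : X) : metric_compact d A ->
  exists M, forall a, A a -> d a0 a <= M.
Proof.
move=> A_compact; have [s sA s_net] := compact_finite_net A_compact ltr01.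
exists (\big[Num.max/0]_(c <- s) d a0 c + 1) => a Aa.
have [c cs ca] := s_net a Aa.
have := le_bigmax_seq 0 c xpredT (d a0) cs isT; have := d_tri a0 c a; lra.
Qed.

Lemma dist_pt_set_le (a b : X) (B : set X) (r : R) :
  B b -> d a b <= r -> dist_pt_set d a B <= r.
Proof.
move=> Bb ab; apply: le_trans ab; apply: ge_inf; last by exists b.
by exists 0 => _ [c _ <-].
Qed.

Lemma dH_le (A B : set X) (r : R) : A !=set0 -> B !=set0 ->
  (forall a, A a -> exists2 b, B b & d a b <= r) ->
  (forall b, B b -> exists2 a, A a & d b a <= r) -> dH d A B <= r.
Proof.
move=> [a0 Aa0] [b0 Bb0] AB BA; rewrite /dH ge_max; apply/andP; split.
- apply: ge_sup; first by exists (dist_pt_set d a0 B), a0.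
  by move=> _ [a Aa <-]; have [b Bb ab] := AB a Aa; exact: dist_pt_set_le ab.
- apply: ge_sup; first by exists (dist_pt_set d b0 A), b0.
  by move=> _ [b Bb <-]; have [a Aa ba] := BA b Bb; exact: dist_pt_set_le ba.
Qed.

Lemma dH_set1_ge (x z : X) (S : set X) (M : R) :
  (forall y, S y -> d y x <= M) -> S z -> d z x <= dH d [set x] S.
Proof.
have dist_x y : dist_pt_set d y [set x] = d y x by rewrite /dist_pt_set image_set1 inf1.
move=> S_bounded Sz; rewrite /dH le_max; apply/orP; right.
rewrite -dist_x; apply: ub_le_sup; last by exists z.
by exists M => _ [y Sy <-]; rewrite dist_x; exact: S_bounded.
Qed.

Lemma spectre_bounded (A : set X) (a0 : X) (M : R) :
  translation_invariant d -> A a0 -> (forall a, A a -> d a0 a <= M) ->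
  forall y, spectre A y -> d y 0 <= M.
Proof.
move=> d_transl Aa0 A_bounded y /(_ a0 Aa0) [Ay|Ay]; apply: le_trans (A_bounded _ Ay).
  by rewrite (d_transl y 0 a0) add0r addrC d_sym.
by rewrite (d_transl y 0 (a0 - y)) addrC subrK add0r.
Qed.

Section InfiniteBalls.
Hypothesis oball_infinite : forall (x : X) (r : R), 0 < r -> infinite_set (oball d x r).

Lemma exists_notin_oball (a : X) (eps : R) (w : seq X) : 0 < eps ->
  exists2 b, d a b < eps & b \notin w.
Proof.
move=> eps_gt0; have := @oball_infinite a eps eps_gt0; apply: contra_notP => no_b.
apply: (@sub_finite_set _ _ [set` w]); last by apply/finite_seqP; exists w.
by move=> b ab /=; apply/negPn/negP => bw; apply: no_b; exists b.
Qed.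

Lemma exists_quasi_sidon_near (eps : R) (s : seq X) : 0 < eps ->
  exists t : seq X, [/\ quasi_sidon t, uniq t, size t = size s,
    (forall c, c \in s -> exists2 b, b \in t & d c b < eps) &
    (forall b, b \in t -> exists2 c, c \in s & d c b < eps)].
Proof.
move=> eps_gt0; elim: s => [|a s [t [sidon_t t_uniq size_t s_near t_near]]].
  by exists [::]; split=> //; exact: quasi_sidon_nil.
have [b ab b_free] := exists_notin_oball a (sidon_obstruction t) eps_gt0.
have bt : b \notin t := contra (@mem_sidon_obstruction _ t b) b_free.
exists (b :: t); split; rewrite /= ?bt ?size_t //.
- exact: quasi_sidon_cons.
- move=> c /predU1P[->|cs]; first by exists b; rewrite ?mem_head.
  by have [b' b't cb'] := s_near c cs; exists b'; rewrite // inE b't orbT.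
- move=> b' /predU1P[->|b't]; first by exists a; rewrite ?mem_head.
  by have [c cs cb'] := t_near b' b't; exists c; rewrite // inE cs orbT.
Qed.

Lemma exists_quasi_sidon_approx (A : set X) (n : nat) (eps : R) : inK d A -> 0 < eps ->
  exists t : seq X, [/\ quasi_sidon t, uniq t, (n <= size t)%N & dH d [set` t] A < eps].
Proof.
move=> [[a0 Aa0] A_compact] eps_gt0.
have e4_gt0 : 0 < eps / 4 by rewrite divr_gt0.
have [s sA A_near] := compact_finite_net A_compact e4_gt0.
pose s' := nseq n a0 ++ s.
have s'A c : c \in s' -> A c by rewrite mem_cat mem_nseq => /orP[/andP[_ /eqP->] | /sA].
have s'_sub c : c \in s -> c \in s' by rewrite mem_cat => ->; rewrite orbT.
have [t [sidon_t t_uniq size_t s'_near t_near]] := exists_quasi_sidon_near s' e4_gt0.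
exists t; split=> //; first by rewrite size_t size_cat size_nseq leq_addr.
have [c cs _] := A_near a0 Aa0; have [b0 b0t _] := s'_near c (s'_sub c cs).
apply: (@le_lt_trans _ _ (eps / 2)); last lra.
apply: dH_le; [by exists b0 | by exists a0 | move=> b bt | move=> a Aa].
- by have [c' cs' cb] := t_near b bt; exists c'; [exact: s'A | rewrite d_sym; lra].
- have [c' cs' ca] := A_near a Aa; have [b bt cb] := s'_near c' (s'_sub c' cs').
  by exists b => //; have := d_tri a c' b; rewrite (d_sym a c'); lra.
Qed.

End InfiniteBalls.
End MetricGroup.

Theorem corollary3p7 (X : zmodType) (R : realType) (d : X -> X -> R)
  (hmet : is_metric d) (hinv : translation_invariant d)
  (hinf : forall (x : X) (r : R), 0 < r -> infinite_set (oball d x r))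
  (A : set X) (hA : inK d A)
  (hcont : spectre_continuous_at d A) :
  spectre A = [set 0].
Proof.
have [d_ge0 [d_eq0 _]] := hmet.
have [[a0 Aa0] A_compact] := hA.
have [M A_bounded] := compact_bounded hmet a0 A_compact.
have S_bounded := spectre_bounded hmet hinv Aa0 A_bounded.
apply/seteqP; split=> [z Sz|_ ->]; last exact: spectre0.
case: (eqVneq z 0) => // nz; exfalso.
have z_pos : 0 < d z 0 by rewrite lt0r d_ge0 andbT; apply: contra nz => /eqP/d_eq0->.
have [delta delta_gt0 near_A] := hcont _ z_pos.
have [t [sidon_t t_uniq size_t dH_tA]] :=
  exists_quasi_sidon_approx hmet hinf 5 hA delta_gt0.
have t_K : inK d [set` t].
  split; last exact: metric_compact_seq.
  by exists (nth 0 t 0); apply: mem_nth; exact: leq_trans size_t.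
have := near_A _ t_K dH_tA; rewrite spectre_quasi_sidon // ltNge.
by rewrite (dH_set1_ge S_bounded Sz).
Qed.
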